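(* For all integers $1\le l\le k$, the Fox function satisfies $\phi(2l,2k)=-\binom{k}{l}$.
   Context: For integers $0\le l\le k$, the Fox function is $\phi(l,k)=\sum_{\mathbf a}(-1)^{w(\mathbf a)+(l-1)}$, where the sum runs over all $l$-element subsets $\mathbf a\subseteq\{1,\dots,k\}$, $\mathbf b=\{1,\dots,k\}\setminus\mathbf a$, and $w(\mathbf a)$ is the number of pairs $(i,j)$ with $i\in\mathbf a$, $j\in\mathbf b$ and $j<i$. *)

From mathcomp Require Import all_boot all_order all_algebra.
Set Implicit Arguments. Unset Strict Implicit. Unset Printing Implicit Defensive.
Import GRing.Theory Num.Theory.
Local Open Scope ring_scope.

(* {1,...,k} is represented by 'I_k (element i+1 <-> ordinal i; order preserved). *)

Definition fox_w (k : nat) (a : {set 'I_k}) : nat :=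
  #|[set p : 'I_k * 'I_k | (p.1 \in a) && (p.2 \notin a) && (p.2 < p.1)%N]|.

(* phi(l,k) = sum over l-subsets a of (-1)^(w(a) + (l-1)).
   The sign (-1)^(l-1) equals (-1)^(l+1) for every integer l, so we use the
   exponent w(a) + l + 1 to avoid truncated subtraction at l = 0. *)
Definition fox_phi (l k : nat) : int :=
  \sum_(a : {set 'I_k} | #|a| == l) (-1) ^+ (fox_w a + l + 1).

From mathcomp Require Import all_boot all_order all_algebra.
Local Open Scope ring_scope.
Set Implicit Arguments. Unset Strict Implicit.
Import GRing.Theory Num.Theory.

(* Since w(a) counts inversions, sum_(|a| = l) (-1)^w(a) is the Gaussian
   binomial [k, l]_q at q = -1.  Splitting off the smallest element of
   {1,...,k} gives [k+1, l] = [k, l-1] + (-1)^l [k, l], and induction on k then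
   shows [2k, 2l] = C(k, l), so phi(2l, 2k) = (-1)^(2l+1) [2k, 2l] = -C(k, l). *)

Lemma fox_wE k (a : {set 'I_k}) : fox_w a =
  (\sum_(i < k) \sum_(j < k) ((i \in a) && (j \notin a) && (j < i)%N : nat))%N.
Proof.
rewrite /fox_w -sum1_card pair_big /= big_mkcond /=.
by apply: eq_bigr => p _; rewrite inE; case: ifP.
Qed.

Lemma card_setE k (a : {set 'I_k}) : #|a| = (\sum_(i < k) (i \in a : nat))%N.
Proof. by rewrite -sum1_card big_mkcond /=; apply: eq_bigr => i _; case: ifP. Qed.

Definition cons_set k (x : bool * {set 'I_k}) : {set 'I_k.+1} :=
  if x.1 then ord0 |: lift ord0 @: x.2 else lift ord0 @: x.2.

Definition uncons_set k (A : {set 'I_k.+1}) : bool * {set 'I_k} :=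
  (ord0 \in A, [set i | lift ord0 i \in A]).

Lemma mem_lift_imset k (a : {set 'I_k}) i : (lift ord0 i \in lift ord0 @: a) = (i \in a).
Proof. exact/mem_imset/lift_inj. Qed.

Lemma ord0_lift_imset k (a : {set 'I_k}) : (ord0 \in lift ord0 @: a) = false.
Proof. by apply/imsetP => -[i _] /eqP; rewrite (negbTE (neq_lift _ _)). Qed.

Lemma lift_ord0_eq0 k (i : 'I_k) : (lift ord0 i == ord0) = false.
Proof. by rewrite eq_sym (negbTE (neq_lift _ _)). Qed.

Lemma cons_setK k : cancel (@cons_set k) (@uncons_set k).
Proof.
move=> [[] a]; rewrite /cons_set /uncons_set /=; congr pair.
- by rewrite !inE eqxx.
- by apply/setP => i; rewrite !inE mem_lift_imset lift_ord0_eq0.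
- by rewrite ord0_lift_imset.
- by apply/setP => i; rewrite !inE mem_lift_imset.
Qed.

Lemma uncons_setK k : cancel (@uncons_set k) (@cons_set k).
Proof.
move=> A; rewrite /cons_set /uncons_set /=; apply/setP => i.
case: (unliftP ord0 i) => [j|] ->.
  by case: (ord0 \in A); rewrite ?inE mem_lift_imset ?inE ?lift_ord0_eq0.
by case: ifP => A0; rewrite ?inE ?eqxx ord0_lift_imset.
Qed.

Lemma card_cons_set k b (a : {set 'I_k}) : #|cons_set (b, a)| = (b + #|a|)%N.
Proof.
have card_lift : #|lift ord0 @: a| = #|a| by apply/card_imset/lift_inj.
by case: b; rewrite /cons_set /= ?cardsU1 ?ord0_lift_imset card_lift.
Qed.

(* The new smallest element is an inversion with every element of [a] exactly
   when it lies in the complement. *)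
Lemma fox_w_cons_set k b (a : {set 'I_k}) :
  fox_w (cons_set (b, a)) = (fox_w a + ~~ b * #|a|)%N.
Proof.
rewrite !fox_wE card_setE /cons_set big_ord_recl /=; case: b => /=.
  rewrite big1 => [|j _]; last by rewrite andbF.
  rewrite add0n addn0; apply: eq_bigr => i _.
  rewrite big_ord_recl /= !in_setU1 eqxx andbF add0n.
  by apply: eq_bigr => j _; rewrite !in_setU1 !mem_lift_imset !lift_ord0_eq0.
rewrite ord0_lift_imset big1 // add0n mul1n addnC -big_split /=.
apply: eq_bigr => i _; rewrite big_ord_recl /= mem_lift_imset ord0_lift_imset !andbT.
congr addn; apply: eq_bigr => j _.
by rewrite !mem_lift_imset /bump /= !add1n ltnS.
Qed.

Definition qbinom_neg1 k l : int := \sum_(a : {set 'I_k} | #|a| == l) (-1) ^+ fox_w a.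

Lemma fox_phiE l k : fox_phi l k = (-1) ^+ l.+1 * qbinom_neg1 k l.
Proof.
rewrite /fox_phi /qbinom_neg1 mulr_sumr; apply: eq_bigr => a _.
by rewrite -addnA addn1 exprD mulrC.
Qed.

Lemma qbinom_neg1_0 l : qbinom_neg1 0 l = (l == 0%N)%:Z.
Proof.
have set0_ord0 (a : {set 'I_0}) : a = set0 by apply/setP => -[].
rewrite /qbinom_neg1; case: l => [|l].
  rewrite (big_pred1 set0) => [|a]; first by rewrite fox_wE big_ord0.
  by rewrite /= (set0_ord0 a) cards0 !eqxx.
by rewrite big_pred0 // => a; rewrite (set0_ord0 a) cards0.
Qed.

Lemma qbinom_neg1S k l :
  qbinom_neg1 k.+1 l =
  (if l is l'.+1 then qbinom_neg1 k l' else 0) + (-1) ^+ l * qbinom_neg1 k l.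
Proof.
rewrite /qbinom_neg1 (reindex (@cons_set k)); last first.
  by exists (@uncons_set k) => x _; [apply: cons_setK | apply: uncons_setK].
rewrite big_mkcond -(pair_big xpredT xpredT (fun b a =>
  if #|cons_set (b, a)| == l then (-1) ^+ fox_w (cons_set (b, a)) else 0 : int)) /=.
rewrite big_bool /= mulr_sumr; congr (_ + _).
  case: l => [|l]; first by rewrite big1 // => a _; rewrite card_cons_set.
  rewrite [RHS]big_mkcond; apply: eq_bigr => a _.
  by rewrite card_cons_set fox_w_cons_set addn0.
rewrite [RHS]big_mkcond; apply: eq_bigr => a _.
rewrite card_cons_set fox_w_cons_set mul1n add0n.
by case: eqP => [->|_]; rewrite ?mulr0 // exprD mulrC.
Qed.

Lemma sign_double l : (-1) ^+ l.*2 = 1 :> int.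
Proof. by rewrite -signr_odd odd_double. Qed.

Lemma sign_doubleS l : (-1) ^+ l.*2.+1 = -1 :> int.
Proof. by rewrite -signr_odd /= odd_double. Qed.

Lemma qbinom_neg1_double k l :
  qbinom_neg1 k.*2 l.*2 = 'C(k, l) /\ qbinom_neg1 k.*2 l.*2.+1 = 0.
Proof.
elim: k l => [|k IHk] l; first by rewrite !qbinom_neg1_0 bin0n; case: l.
have odd_row m :
    qbinom_neg1 k.*2.+1 m.*2 = 'C(k, m) /\ qbinom_neg1 k.*2.+1 m.*2.+1 = 'C(k, m).
  rewrite !qbinom_neg1S sign_double sign_doubleS !(IHk m).1 (IHk m).2 mulr0 addr0 mul1r.
  by case: m => [|m]; rewrite ?add0r ?bin0 // doubleS (IHk m).2 add0r.
rewrite doubleS !(qbinom_neg1S k.*2.+1) sign_double sign_doubleS.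
rewrite !(odd_row l).1 (odd_row l).2 mul1r mulN1r addrN.
split=> //; case: l => [|l]; first by rewrite add0r !bin0.
by rewrite doubleS /= (odd_row l).2 binS PoszD addrC.
Qed.

Theorem proposition2p5 (l k : nat) (hl : (1 <= l)%N) (hlk : (l <= k)%N) :
  fox_phi (2 * l) (2 * k) = - ('C(k, l))%:Z.
Proof.
by rewrite fox_phiE !mul2n sign_doubleS (qbinom_neg1_double k l).1 mulN1r.
Qed.
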